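(* Let $A$ be a set of $n$ distinct real numbers forming an arithmetic progression. Then for every $a\in A$ there is an ordering $b_1,b_2,\dots,b_n$ of the elements of $A$ with $b_1=a$ such that the $n-1$ numbers $|b_2-b_1|,|b_3-b_2|,\dots,|b_n-b_{n-1}|$ are pairwise distinct. *)

From mathcomp Require Import all_boot all_order all_algebra.
From mathcomp Require Import reals.
Set Implicit Arguments. Unset Strict Implicit. Unset Printing Implicit Defensive.
Import Order.TTheory GRing.Theory Num.Theory.
Local Open Scope ring_scope.

Definition ap (R : realType) (c d : R) (n : nat) : seq R :=
  [seq c + i%:R * d | i <- iota 0 n].

Definition consec_absdiffs (R : realType) (s : seq R) : seq R :=
  [seq `|p.2 - p.1| | p <- zip s (behead s)].

From mathcomp Require Import all_boot all_order all_algebra.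
From mathcomp Require Import reals zify.
Set Implicit Arguments. Unset Strict Implicit. Unset Printing Implicit Defensive.
Import GRing.Theory Num.Theory IntDist.

(* Since c + i d |-> i is an affine bijection multiplying distances by |d|, it suffices
   to find, for every i < n, a graceful path on {0, ..., n-1} starting at i: a
   permutation of 0, ..., n-1 whose consecutive distances are exactly 1, ..., n-1.
   By the symmetry x |-> n-1-x we may start at some k with 2k < n, and we build, by
   strong induction on n, such a path from k that ends at k + n/2.  Reversing and
   mirroring turns a path from k to k + n/2 into one from ceil(n/2) - 1 - k, so we may
   assume 4k < n.  The path then zigzags k, n-k-1, k-1, n-k, ..., 0, n-1 (or, when
   n <= 4k+2, k, n-k, k-1, ..., n-1, 0) through the outer vertices, realising the
   largest distances, and jumps to a path of the same kind on the middle block; the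
   prescribed end points make the jump have exactly the one missing length. *)

Lemma zip_map2 (S T : Type) (f : S -> T) (s t : seq S) :
  zip (map f s) (map f t) = [seq (f q.1, f q.2) | q <- zip s t].
Proof. by elim: s t => [|x s IH] [|y t] //=; rewrite IH. Qed.

Lemma mem_zip (S T : eqType) (s : seq S) (t : seq T) x y :
  (x, y) \in zip s t -> x \in s /\ y \in t.
Proof.
elim: s t => [|x' s IH] [|y' t] //=; rewrite inE => /orP[/eqP[-> ->]|/IH[xs yt]].
  by split; apply: mem_head.
by rewrite !inE xs yt !orbT.
Qed.

Lemma zip_iota_behead m l :
  zip (iota m l) (behead (iota m l)) = [seq (i, i.+1) | i <- iota m l.-1].
Proof. by elim: l m => [|[|l] IH] m //=; rewrite -IH. Qed.

Lemma head_rev (T : Type) (x : T) s : head x (rev s) = last x s.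
Proof. by case/lastP: s => [|s y] //; rewrite rev_rcons last_rcons. Qed.

Lemma last_rev (T : Type) (x : T) s : last x (rev s) = head x s.
Proof. by case: s => [|y s] //; rewrite rev_cons last_rcons. Qed.

Definition gaps (s : seq nat) : seq nat :=
  [seq `|p.2 - p.1| | p : nat * nat <- zip s (behead s)].

Lemma gaps_cons2 x y s : gaps [:: x, y & s] = `|y - x| :: gaps (y :: s).
Proof. by []. Qed.

Lemma gaps_map (T : Type) (f : T -> nat) s :
  gaps (map f s) = [seq `|f q.2 - f q.1| | q <- zip s (behead s)].
Proof. by rewrite /gaps behead_map zip_map2 -map_comp. Qed.

Lemma gaps_cat s t : s != [::] -> t != [::] ->
  gaps (s ++ t) = gaps s ++ `|head 0 t - last 0 s| :: gaps t.
Proof.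
elim: s => [|x [|y s] IH] // _ t0; first by case: t {IH} t0.
by rewrite cat_cons cat_cons gaps_cons2 -cat_cons IH.
Qed.

Lemma gaps_rev s : gaps (rev s) = rev (gaps s).
Proof.
elim: s => [|x [|y s] IH] //.
rewrite rev_cons -cats1 gaps_cat -?size_eq0 ?size_rev //.
by rewrite IH last_rev gaps_cons2 rev_cons cats1 /= distnC.
Qed.

Lemma gaps_shift j s : gaps (map (addn j) s) = gaps s.
Proof. by rewrite gaps_map; apply: eq_map => -[x y] /=; lia. Qed.

Lemma gaps_mirror N s : all (fun x => x <= N) s -> gaps [seq N - x | x <- s] = gaps s.
Proof.
move=> /allP sN; rewrite gaps_map /gaps.
by apply/eq_in_map => -[x y] /mem_zip[/sN xN /mem_behead/sN yN] /=; lia.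
Qed.

Definition graceful n (p : seq nat) :=
  perm_eq p (iota 0 n) && perm_eq (gaps p) (iota 1 n.-1).

Lemma graceful_size n p : graceful n p -> size p = n.
Proof. by case/andP=> /perm_size ->; rewrite size_iota. Qed.

Lemma graceful_rev n p : graceful n p -> graceful n (rev p).
Proof. by rewrite /graceful gaps_rev !perm_rev. Qed.

Lemma perm_iota_mirror n : perm_eq [seq n.-1 - x | x <- iota 0 n] (iota 0 n).
Proof.
apply: uniq_perm (iota_uniq _ _) _ => [|x].
  by rewrite map_inj_in_uniq ?iota_uniq // => x y; rewrite !mem_iota; lia.
rewrite mem_iota; apply/mapP/idP => [[y]|lt_xn]; first by rewrite mem_iota => ? ->; lia.
by exists (n.-1 - x); rewrite ?mem_iota; lia.
Qed.

Lemma graceful_mirror n p : graceful n p -> graceful n [seq n.-1 - x | x <- p].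
Proof.
case/andP=> pp gp; apply/andP; split.
  exact: perm_trans (perm_map _ pp) (perm_iota_mirror n).
rewrite gaps_mirror //; apply/allP => x; rewrite (perm_mem pp) mem_iota; lia.
Qed.

Definition zigzag l a b := mkseq (fun i => if odd i then b + i./2 else a - i./2) l.

Lemma zigzag_gaps l a b : (l.-1)./2 <= a <= b -> gaps (zigzag l a b) = iota (b - a) l.-1.
Proof.
move=> lab; rewrite gaps_map zip_iota_behead -map_comp -[b - a]addn0 iotaDl.
apply/eq_in_map => i; rewrite mem_iota /= => lt_il.
by case oi: (odd i) => /=; lia.
Qed.

Lemma zigzag_perm l a b : (l.-1)./2 <= a < b ->
  perm_eq (zigzag l a b) (iota (a.+1 - l.+1./2) l.+1./2 ++ iota b l./2).
Proof.
move=> lab; apply: uniq_perm.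
- apply/mkseq_uniqP => i j; rewrite !inE => lt_il lt_jl.
  by case oi: (odd i); case oj: (odd j); lia.
- rewrite cat_uniq !iota_uniq andbT /=; apply/hasPn => x; rewrite !mem_iota; lia.
- move=> x; rewrite mem_cat !mem_iota; apply/mapP/idP => [[i]|/orP[lo|hi]].
  + by rewrite mem_iota => lt_il ->; case oi: (odd i); lia.
  + by exists (a - x).*2; rewrite ?mem_iota /= ?odd_double ?doubleK; lia.
  + by exists (x - b).*2.+1; rewrite ?mem_iota /= ?odd_double /= ?uphalf_double; lia.
Qed.

Lemma zigzag_last l a b : last 0 (zigzag l.+1 a b) = if odd l then b + l./2 else a - l./2.
Proof. by rewrite /zigzag mkseqS last_rcons. Qed.

Lemma graceful_splice j m r F Q :
  0 < j -> 0 < m -> graceful m Q ->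
  perm_eq F (iota 0 j ++ iota (j + m) r) -> perm_eq (gaps F) (iota m.+1 (j + r).-1) ->
  `|j + head 0 Q - last 0 F| = m ->
  graceful (j + m + r) (F ++ map (addn j) Q).
Proof.
move=> j0 m0 gQ pF gF junction.
case: Q gQ junction => [/graceful_size/= m00|q Q]; first by rewrite -m00 in m0.
case/andP=> pQ gQ junction; apply/andP; split.
  have pG : perm_eq (map (addn j) (q :: Q)) (iota j m).
    by rewrite -[j in iota j]addn0 iotaDl perm_map.
  rewrite !iotaD !add0n -catA; apply: perm_trans (perm_cat pF pG) _.
  by rewrite -catA perm_cat2l perm_catC.
have F0 : F != [::] by rewrite -size_eq0 (perm_size pF) size_cat !size_iota; lia.
rewrite gaps_cat // gaps_shift /= junction.
have -> : (j + m + r).-1 = m.-1 + (j + r).-1.+1 by lia.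
rewrite iotaD (_ : 1 + m.-1 = m); last by lia.
apply/permP => P; rewrite !count_cat /= (permP gF) (permP gQ).
by rewrite addnCA [RHS]addnCA; congr (_ + _); apply: addnC.
Qed.

Lemma last_map_addn x j s : s != [::] -> last x (map (addn j) s) = j + last 0 s.
Proof. by case: s => // y s _; rewrite /= last_map. Qed.

Definition graceful_span n k p := [/\ graceful n p, head 0 p = k & last 0 p = k + n./2].

Lemma graceful_span_sym n k p : graceful_span n k p ->
  graceful_span n (n.-1 - n./2 - k) (rev [seq n.-1 - x | x <- p]).
Proof.
case; case: p => [/graceful_size <- <- _ //|q p gp /= hp lp].
have lt_last : last q p < n.
  by have := mem_last q p; rewrite (perm_mem (proj1 (andP gp))) mem_iota.
split; first exact: graceful_rev (graceful_mirror gp).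
  by rewrite head_rev /= last_map lp; lia.
by rewrite last_rev /= hp; lia.
Qed.

Lemma graceful_span_zigzag_even n k Q :
  k.*2.*2.+2 < n -> graceful_span (n - k.+1.*2) k Q ->
  graceful_span n k (zigzag k.*2.+2 k (n - k.+1) ++ map (addn k.+1) Q).
Proof.
move=> lt_kn [gQ hQ lQ]; set m := n - k.+1.*2 in gQ lQ *.
have Q0 : Q != [::] by rewrite -size_eq0 (graceful_size gQ); lia.
split; last by rewrite last_cat last_map_addn // lQ; lia.
  rewrite {1}(_ : n = k.+1 + m + k.+1); last by lia.
  apply: graceful_splice => //; first by lia.
  - have -> : k.+1 + m = n - k.+1 by lia.
    apply: perm_trans (zigzag_perm _) _; first by rewrite /=; lia.
    by rewrite /= uphalf_double doubleK subnn.
  - have -> : (k.+1 + k.+1).-1 = (k.*2.+2).-1 by lia.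
    have -> : m.+1 = n - k.+1 - k by lia.
    by rewrite zigzag_gaps //; lia.
  - by rewrite hQ zigzag_last /= odd_double /=; lia.
by rewrite /= subn0.
Qed.

Lemma graceful_span_zigzag_odd n k Q :
  1 < n -> k.*2.*2 < n <= k.*2.*2.+2 ->
  graceful_span (n - k.*2.+1) (n - k.*2.+1 - k.+1) Q ->
  graceful_span n k (zigzag k.*2.+1 k (n - k) ++ map (addn k.+1) Q).
Proof.
move=> lt1n /andP[lt_kn le_nk] [gQ hQ lQ]; set m := n - k.*2.+1 in gQ hQ lQ *.
have Q0 : Q != [::] by rewrite -size_eq0 (graceful_size gQ); lia.
split; last by rewrite last_cat last_map_addn // lQ; lia.
  rewrite {1}(_ : n = k.+1 + m + k); last by lia.
  apply: graceful_splice => //; first by lia.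
  - have -> : k.+1 + m = n - k by lia.
    apply: perm_trans (zigzag_perm _) _; first by rewrite /=; lia.
    by rewrite /= uphalf_double doubleK subnn.
  - have -> : (k.+1 + k).-1 = (k.*2.+1).-1 by lia.
    have -> : m.+1 = n - k - k by lia.
    by rewrite zigzag_gaps //; lia.
  - by rewrite hQ zigzag_last odd_double doubleK; lia.
by rewrite /= subn0.
Qed.

Lemma graceful_span_exists n k : k.*2 < n -> exists p, graceful_span n k p.
Proof.
elim/ltn_ind: n k => n IH k lt_kn.
wlog lt_k : k lt_kn / k.*2 < n - n./2.
  move=> far; case: (ltnP k.*2 (n - n./2)) => [|ge_k]; first exact: far.
  have [p sp] : exists p, graceful_span n (n.-1 - n./2 - k) p by apply: far; lia.
  have k_sym : n.-1 - n./2 - (n.-1 - n./2 - k) = k by lia.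
  by exists (rev [seq n.-1 - x | x <- p]); rewrite -{1}k_sym; apply: graceful_span_sym.
have [lt_n|le_n] := ltnP k.*2.*2.+2 n.
  have [Q sQ] : exists Q, graceful_span (n - k.+1.*2) k Q by apply: IH; lia.
  by eexists; apply: graceful_span_zigzag_even sQ.
have [le_n1|lt1n] := leqP n 1.
  have [-> ->] : n = 1 /\ k = 0 by lia.
  by exists [:: 0].
have [Q sQ] : exists Q, graceful_span (n - k.*2.+1) (n - k.*2.+1 - k.+1) Q.
  by apply: IH; lia.
by eexists; apply: graceful_span_zigzag_odd sQ => //; apply/andP; split; lia.
Qed.

Lemma graceful_path_from n i : i < n -> exists2 p, graceful n p & head 0 p = i.
Proof.
move=> lt_in; have [lt_i|ge_i] := ltnP i.*2 n.
  by have [p [gp hp _]] := graceful_span_exists lt_i; exists p.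
have [p [gp hp _]] : exists p, graceful_span n (n.-1 - i) p.
  by apply: graceful_span_exists; lia.
exists [seq n.-1 - x | x <- p]; first exact: graceful_mirror.
by case: p gp hp => [/graceful_size/= n0 _|q p _ /= ->]; lia.
Qed.

Local Open Scope ring_scope.

Lemma consec_absdiffs_ap (R : realType) (c d : R) (p : seq nat) :
  consec_absdiffs [seq c + i%:R * d | i <- p] = [seq g%:R * `|d| | g <- gaps p].
Proof.
rewrite /consec_absdiffs behead_map zip_map2 /gaps -!map_comp.
apply: eq_map => -[x y] /=.
by rewrite natr_absz intr_norm intrB opprD addrACA subrr add0r -mulrBl normrM.
Qed.

Theorem theorem1 (R : realType) (n : nat) (c d : R) (hd : d != 0) (a : R) :
  a \in ap c d n ->
  exists b : seq R,
    [/\ perm_eq b (ap c d n), head 0 b = a & uniq (consec_absdiffs b)].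
Proof.
case/mapP=> i; rewrite mem_iota => /andP[_ lt_in] ->.
have [p gp hp] := graceful_path_from lt_in.
exists [seq c + j%:R * d | j <- p]; split.
- exact/perm_map/(proj1 (andP gp)).
- by case: p gp hp => [/graceful_size n0|q p _ <-] //; rewrite -n0 in lt_in.
rewrite consec_absdiffs_ap map_inj_uniq ?(perm_uniq (proj2 (andP gp))) ?iota_uniq //.
have d0 : `|d| != 0 by rewrite normr_eq0.
by move=> x y /(mulIf d0)/eqP; rewrite eqr_nat => /eqP.
Qed.
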